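(* Consider the lattice Boltzmann scheme and initialisation $w$ described in the context, and let $H\in\mathbb{N}^*$. Assume that (i) the Fourier symbol of $w_1$ satisfies $\hat w_1(\xi\Delta x)=1+O(|\xi\Delta x|^{H+1})$ as $|\xi\Delta x|\to0$ (equivalently $\omega_1^{(0)}=1$ and $\omega_1^{(h)}=0$ for $h\in\{1,\dots,H\}$); and (ii) for every $n\in\{1,\dots,Q\}$ the modified equation of the $n$-th starting scheme matches that of the bulk finite difference scheme up to order $H$, i.e. $\log\hat g_{[n]}(\xi\Delta x)-n\log\hat g_1(\xi\Delta x)=O(|\xi\Delta x|^{H+1})$. Then for every $n>Q$ the modified equation of the $n$-th starting scheme also matches that of the bulk finite difference scheme up to order $H$, i.e. $\hat g_{[n]}(\xi\Delta x)=\hat g_1(\xi\Delta x)^n+O(|\xi\Delta x|^{H+1})$.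
   Context: Fix $d\ge1$, $q\ge1$, velocities $c_1,\dots,c_q\in\mathbb{Z}^d$, invertible $M$, $S=\mathrm{diag}(s_1,\dots,s_q)$ with $s_i\in(0,2]$ for $i\ge2$, $\epsilon\in\mathbb{R}^q$, $\epsilon_1=1$; $K=I-S(I-\epsilon e_1^T)$; acoustic scaling $\Delta t=\Delta x/\lambda$. Shifts $(x_\ell\phi)(x)=\phi(x-\Delta xe_\ell)$; $T=M\mathrm{diag}(x^{c_1},\dots,x^{c_q})M^{-1}$, $E=TK$. $Q$ is the number of $i\in\{2,\dots,q\}$ with $s_i\ne1$. The initialisation is $m(0,x)=w\,m_1^\circ(x)$ with $w$ a vector of Laurent polynomials in the shifts, $w_1$ having asymptotic expansion $\omega_1^{(0)}+\sum_{h\ge1}\Delta x^h\omega_1^{(h)}$ on smooth functions. Fourier symbols: for a Laurent polynomial operator $\mathsf{d}$ in the shifts, $\hat{\mathsf d}(\xi\Delta x)$ is obtained by substituting $x_\ell\mapsto e^{-i\xi_\ell\Delta x}$, $\xi\in\mathbb{R}^d$. The bulk finite difference scheme $z^{Q+1-q}\det(zI-E)m_1=0$ has amplification polynomial $\hat\Phi(z,\xi\Delta x)=z^{Q+1-q}\det(zI-\hat E(\xi\Delta x))$; $\hat g_1(\xi\Delta x)$ denotes its root with $\hat g_1(\xi\Delta x)=1+O(|\xi\Delta x|)$ as $|\xi\Delta x|\to0$ (the consistency root), and the modified equation of the bulk scheme is $\partial_t=\frac{\lambda}{\Delta x}\log\hat g_1(\xi\Delta x)$. For $n\in\mathbb{N}^*$,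 $\hat g_{[n]}(\xi\Delta x)=(\hat E(\xi\Delta x)^n\hat w(\xi\Delta x))_1$ is the symbol of the $n$-th starting scheme $m_1(n\Delta t,\cdot)=(E^nw)_1m_1^\circ$, whose modified equation is $\partial_t=\frac{\lambda}{n\Delta x}\log\hat g_{[n]}(\xi\Delta x)$ as $|\xi\Delta x|\to0$. *)

From HB Require Import structures.
From mathcomp Require Import all_boot all_order all_algebra.
From mathcomp Require Import all_classical all_reals all_analysis.
From mathcomp Require Import complex.
Set Implicit Arguments. Unset Strict Implicit. Unset Printing Implicit Defensive.
Import Order.TTheory GRing.Theory Num.Theory.
Local Open Scope ring_scope.
Local Open Scope complex_scope.

Section LBM.
Variable R : realType.
Local Notation C := R[i].

(* Euclidean norm of a (dimensionless) wave-number theta = xi * Dx in R^d. *)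
Definition vnorm (d : nat) (th : 'I_d -> R) : R :=
  Num.sqrt (\sum_(l < d) th l ^+ 2).

Definition dotZ (d : nat) (th : 'I_d -> R) (k : 'I_d -> int) : R :=
  \sum_(l < d) th l * (k l)%:~R.

Definition expi (a : R) : C := cos a +i* sin a.

(* Fourier symbol of the shift monomial x^k = prod_l x_l^{k_l}, with
   x_l |-> e^{-i theta_l}: the symbol is e^{-i theta . k}. *)
Definition monomial_symbol (d : nat) (k : 'I_d -> int) (th : 'I_d -> R) : C :=
  expi (- dotZ th k).

(* A Laurent polynomial in the shifts with real coefficients, represented as a
   finite list of (coefficient, exponent) pairs: sum a * x^k. *)
Definition laurent (d : nat) := seq (R * ('I_d -> int)).

Definition laurent_symbol (d : nat) (p : laurent d) (th : 'I_d -> R) : C :=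
  \sum_(m <- p) (m.1)%:C * monomial_symbol m.2 th.

(* Principal complex logarithm Log z = ln |z| + i Arg z, Arg z in (-pi, pi]. *)
Definition Arg (z : C) : R :=
  let x := complex.Re z in let y := complex.Im z in
  if 0 < x then atan (y / x)
  else if x < 0 then (if 0 <= y then atan (y / x) + pi else atan (y / x) - pi)
  else if 0 < y then pi / 2 else if y < 0 then - (pi / 2) else 0.

Definition Logc (z : C) : C := ln (Normc.normc z) +i* Arg z.

Definition idx1 (q : nat) (hq : (0 < q)%N) : 'I_q := Ordinal hq.

Definition e1 (q : nat) (hq : (0 < q)%N) : 'cV[R]_q := delta_mx (idx1 hq) 0.

Definition Kmat (q : nat) (hq : (0 < q)%N) (s : 'I_q -> R) (eps : 'cV[R]_q)
  : 'M[R]_q :=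
  1%:M - diag_mx (\row_i s i) *m (1%:M - eps *m (e1 hq)^T).

Definition Qnum (q : nat) (hq : (0 < q)%N) (s : 'I_q -> R) : nat :=
  #|[set i : 'I_q | (i != idx1 hq) && (s i != 1)]|.

Definition realC (q : nat) (A : 'M[R]_q) : 'M[C]_q := map_mx (fun x => x%:C) A.

Definition That (d q : nat) (c : 'I_q -> 'I_d -> int) (M : 'M[R]_q)
  (th : 'I_d -> R) : 'M[C]_q :=
  realC M *m diag_mx (\row_j monomial_symbol (c j) th) *m realC (invmx M).

Definition Ehat (d q : nat) (hq : (0 < q)%N) (c : 'I_q -> 'I_d -> int)
  (M : 'M[R]_q) (s : 'I_q -> R) (eps : 'cV[R]_q) (th : 'I_d -> R) : 'M[C]_q :=
  That c M th *m realC (Kmat hq s eps).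

Definition Phihat (d q : nat) (hq : (0 < q)%N) (c : 'I_q -> 'I_d -> int)
  (M : 'M[R]_q) (s : 'I_q -> R) (eps : 'cV[R]_q) (z : C) (th : 'I_d -> R) : C :=
  z ^ ((Qnum hq s)%:Z + 1 - q%:Z) * \det (z%:M - Ehat hq c M s eps th).

Definition what (d q : nat) (w : 'I_q -> laurent d) (th : 'I_d -> R) : 'cV[C]_q :=
  \col_j laurent_symbol (w j) th.

Definition gstart (d q : nat) (hq : (0 < q)%N) (c : 'I_q -> 'I_d -> int)
  (M : 'M[R]_q) (s : 'I_q -> R) (eps : 'cV[R]_q) (w : 'I_q -> laurent d)
  (n : nat) (th : 'I_d -> R) : C :=
  ((Ehat hq c M s eps th ^+ n) *m what w th) (idx1 hq) 0.

Definition OAt0 (d : nat) (f : ('I_d -> R) -> C) (p : nat) : Prop :=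
  exists K : R, exists delta : R, 0 < delta /\
    forall th : 'I_d -> R, vnorm th < delta -> Normc.normc (f th) <= K * vnorm th ^+ p.

End LBM.
Arguments OAt0 [R d] f%_ring_scope p%_nat_scope.

(* The columns of K, hence of E = T K, vanish outside the set J made of the
   index 1 and of the i with s_i <> 1, and #|J| = Q + 1.  Hence the J-rows of
   E^n w only involve the (Q+1) x (Q+1) block A of E on J, and
   g_[n] = (A^n w_J)_1.  The consistency root g1 is a nonzero eigenvalue of E,
   thus a root of the characteristic polynomial of A, and Cayley-Hamilton
   shows that the defects g_[n] - g1^n satisfy a linear recurrence of order
   Q + 1 whose coefficients, those of char_poly A, stay bounded near 0.  So an
   O(|xi dx|^(H+1)) bound propagates from the first Q + 1 defects to all of
   them.  For these, n = 0 is (i); for 1 <= n <= Q, g_[n] and g1 are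
   Lipschitz symbols equal to w_1(0) = 1 at the origin, so near 0
   g_[n] = g1^n exp(Log g_[n] - n Log g1) and (ii) gives the bound. *)

From HB Require Import structures.
From mathcomp Require Import all_boot all_order all_algebra.
From mathcomp Require Import all_classical all_reals all_analysis.
From mathcomp Require Import complex.
From mathcomp Require Import lra ring.
Import Order.TTheory GRing.Theory Num.Theory.
Import numFieldNormedType.Exports.
Local Open Scope ring_scope.
Local Open Scope complex_scope.
Set Implicit Arguments. Unset Strict Implicit.

Section ColumnSupport.
Variables (F : fieldType) (q r : nat) (J : {set 'I_q}) (E : 'M[F]_q).
Hypothesis cardJ : #|J| = r.+1.
Hypothesis E_col0 : forall i k, k \notin J -> E i k = 0.

Definition enumJ (i : 'I_r.+1) : 'I_q := enum_val (cast_ord (esym cardJ) i).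

Lemma enumJ_onto k : k \in J -> exists i, enumJ i = k.
Proof.
move=> kJ; exists (cast_ord cardJ (enum_rank_in kJ k)).
by rewrite /enumJ cast_ordK enum_rankK_in.
Qed.

Lemma sum_over_J (G : 'I_q -> F) : (forall k, k \notin J -> G k = 0) ->
  \sum_k G k = \sum_i G (enumJ i).
Proof.
move=> G0; rewrite (bigID (mem J)) /= [X in _ + X]big1 ?addr0 //.
rewrite (big_enum_val (A := mem J)) /= (reindex (cast_ord (esym cardJ))) //=.
by exists (cast_ord cardJ) => i _; [exact: cast_ordKV | exact: cast_ordK].
Qed.

Lemma rowsub_mulmx p (B : 'M[F]_(q, p)) :
  rowsub enumJ (E *m B) = mxsub enumJ enumJ E *m rowsub enumJ B.
Proof.
apply/matrixP => i j; rewrite !mxE (sum_over_J (G := fun k => E (enumJ i) k * B k j)).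
  by apply: eq_bigr => k _; rewrite !mxE.
by move=> k kJ; rewrite E_col0 ?mul0r.
Qed.

Lemma rowsub_exp_mulmx m (W : 'cV[F]_q) :
  rowsub enumJ (E ^+ m *m W) = mxsub enumJ enumJ E ^+ m *m rowsub enumJ W.
Proof.
elim: m => [|m IH]; first by rewrite !expr0 !mul1mx.
by rewrite !exprS -!mulmxE -!mulmxA rowsub_mulmx IH.
Qed.

Lemma root_char_poly_mxsub g : g != 0 -> \det (g%:M - E) = 0 ->
  root (char_poly (mxsub enumJ enumJ E)) g.
Proof.
(* A left eigenvector v of E for g <> 0 vanishes off J, as g v_k = (v E)_k
   = 0 there, so its restriction to J is a left eigenvector of the block. *)
move=> g0 /eqP/det0P [v v0 vE0].
have vE : v *m E = g *: v.
  by apply/eqP; rewrite eq_sym -subr_eq0 -mul_mx_scalar -mulmxBr vE0.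
have v_col0 k : k \notin J -> v 0 k = 0.
  move=> kJ; have /esym/eqP := congr1 (fun u : 'rV_q => u 0 k) vE.
  rewrite !mxE big1 => [|l _]; last by rewrite E_col0 ?mulr0.
  by rewrite mulf_eq0 (negbTE g0) => /eqP.
rewrite -eigenvalue_root_char; apply/eigenvalueP; exists (colsub enumJ v).
  apply/rowP => i; have := congr1 (fun u : 'rV_q => u 0 (enumJ i)) vE.
  rewrite !mxE => <-; rewrite (sum_over_J (G := fun k => v 0 k * E k (enumJ i))).
    by apply: eq_bigr => j _; rewrite !mxE.
  by move=> k kJ; rewrite v_col0 ?mul0r.
apply: contra v0 => /eqP vJ0; apply/eqP/rowP => k; rewrite mxE.
have [kJ|kJ] := boolP (k \in J); last exact: v_col0.
have [i <-] := enumJ_onto kJ.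
by have := congr1 (fun u : 'rV_r.+1 => u 0 i) vJ0; rewrite !mxE.
Qed.

End ColumnSupport.

Lemma horner_mx_coef (R : comNzRingType) n (A : 'M[R]_n.+1) (p : {poly R}) :
  horner_mx A p = \sum_(k < size p) p`_k *: A ^+ k.
Proof.
rewrite -{1}(coefK p) poly_def rmorph_sum /=; apply: eq_bigr => k _.
by rewrite linearZ /= rmorphXn /= horner_mx_X.
Qed.

Lemma char_poly_recurrence (F : fieldType) n (A : 'M[F]_n.+1) (W : 'cV[F]_n.+1) i0 g m :
  root (char_poly A) g ->
  let D j := (A ^+ j *m W) i0 0 - g ^+ j in
  D (m + n.+1)%N = - \sum_(k < n.+1) (char_poly A)`_k * D (m + k)%N.
Proof.
move=> pg D; set p := char_poly A.
have size_p : size p = n.+2 := size_char_poly A.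
have lead_p : p`_n.+1 = 1.
  by have := char_poly_monic A; rewrite monicE lead_coefE size_p => /eqP.
have hornerA : \sum_(k < size p) p`_k * (A ^+ (m + k) *m W) i0 0 = 0.
  have := congr1 (fun B => (B *m (A ^+ m *m W)) i0 0) (Cayley_Hamilton A).
  rewrite /= -/p horner_mx_coef mul0mx mulmx_suml summxE mxE; apply: etrans.
  by apply: eq_bigr => k _; rewrite -scalemxAl mxE mulmxA mulmxE -exprD addnC !mxE.
have hornerg : \sum_(k < size p) p`_k * g ^+ (m + k) = 0.
  have := congr1 (fun x => g ^+ m * x) (rootP pg).
  rewrite /= horner_coef mulr0 mulr_sumr; apply: etrans.
  by apply: eq_bigr => k _; rewrite exprD mulrCA.
have : \sum_(k < size p) p`_k * D (m + k)%N = 0.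
  have := congr2 (fun x y => x - y) hornerA hornerg; rewrite /= subr0 -sumrB.
  by apply: etrans; apply: eq_bigr => k _; rewrite mulrBr.
by rewrite size_p big_ord_recr /= lead_p mul1r addrC => /eqP; rewrite addr_eq0 => /eqP.
Qed.

Section ComplexNorm.
Variable R : realType.
Local Notation normc := (@Normc.normc R).
Implicit Types (a b : R) (z : R[i]).

Lemma normc_ge0 z : 0 <= normc z.
Proof. by case: z => a b; rewrite /Normc.normc sqrtr_ge0. Qed.

Lemma normc_le_abs_ReIm a b : normc (a +i* b) <= `|a| + `|b|.
Proof.
have ab0 : 0 <= `|a| + `|b| by rewrite addr_ge0.
rewrite /Normc.normc -(ger0_norm ab0) -sqrtr_sqr ler_wsqrtr //.
have := normr_ge0 a; have := normr_ge0 b.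
rewrite -(real_normK (num_real a)) -(real_normK (num_real b)); nra.
Qed.

Lemma abs_Re_le_normc z : `|complex.Re z| <= normc z.
Proof.
case: z => a b; rewrite /Normc.normc /= -sqrtr_sqr ler_wsqrtr //.
by rewrite lerDl sqr_ge0.
Qed.

Lemma abs_Im_le_normc z : `|complex.Im z| <= normc z.
Proof.
case: z => a b; rewrite /Normc.normc /= -sqrtr_sqr ler_wsqrtr //.
by rewrite lerDr sqr_ge0.
Qed.

Lemma normcX z n : normc (z ^+ n) = normc z ^+ n.
Proof.
elim: n => [|n IH]; first by rewrite !expr0 Normc.normc1.
by rewrite !exprS Normc.normcM IH.
Qed.

Lemma Re_gt0_near1 z : normc (z - 1) <= 2^-1 -> 0 < complex.Re z.
Proof.
move=> z1; have := le_trans (abs_Re_le_normc (z - 1)) z1.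
by case: z {z1} => a b /=; rewrite ler_norml => /andP[]; lra.
Qed.

Lemma normc_le2_near1 z : normc (z - 1) <= 2^-1 -> normc z <= 2.
Proof.
move=> z1; have := le_normcD (z - 1) 1; rewrite subrK Normc.normc1.
by move/le_trans; apply; lra.
Qed.

End ComplexNorm.

Section SineCosine.
Variable R : realType.

Lemma dist0_le_of_deriv_le1 (f df : R -> R) :
  (forall x : R, is_derive x (1 : R) f (df x)) -> continuous f ->
  (forall x, `|df x| <= 1) -> forall x, `|f x - f 0| <= `|x|.
Proof.
move=> f'df fC df1 x; have [x0|x0] := leP 0 x.
  have [c _ ->] := MVT_segment x0 (fun y _ => f'df y) (continuous_subspaceT fC).
  by rewrite subr0 normrM ler_piMl.
have [c _ e] := MVT_segment (ltW x0) (fun y _ => f'df y) (continuous_subspaceT fC).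
by rewrite distrC e sub0r normrM normrN ler_piMl.
Qed.

Lemma abs_sin_le x : `|sin x| <= `|x| :> R.
Proof.
have := dist0_le_of_deriv_le1 (@is_derive_sin R) (@continuous_sin R) (@cos_max R) x.
by rewrite sin0 subr0.
Qed.

Lemma abs_cos_sub1_le x : `|cos x - 1| <= `|x| :> R.
Proof.
have := dist0_le_of_deriv_le1 (@is_derive_cos R) (@continuous_cos R) _ x.
by rewrite cos0; apply => y; rewrite normrN sin_max.
Qed.

End SineCosine.

Section ComplexExp.
Variable R : realType.
Local Notation C := R[i].
Local Notation normc := (@Normc.normc R).

Lemma expi0 : expi 0 = 1 :> C.
Proof. by rewrite /expi cos0 sin0. Qed.

Lemma expiD (a b : R) : expi (a + b) = expi a * expi b.
Proof. by rewrite /expi cosD sinD; simpc; rewrite [X in _ +i* X]addrC. Qed.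

Lemma normc_expi_sub1_le (a : R) : normc (expi a - 1) <= 2 * `|a|.
Proof.
have -> : expi a - 1 = (cos a - 1) +i* sin a by rewrite /expi; simpc.
apply: le_trans (normc_le_abs_ReIm _ _) _; rewrite mulr2n mulrDl mul1r.
by rewrite lerD ?abs_cos_sub1_le ?abs_sin_le.
Qed.

Definition expc (z : C) : C := (expR (complex.Re z))%:C * expi (complex.Im z).

Lemma expcD (x y : C) : expc (x + y) = expc x * expc y.
Proof.
case: x => a b; case: y => a' b'.
by rewrite /expc /= expRD expiD rmorphM mulrACA.
Qed.

Lemma expcMn (z : C) n : expc (n%:R * z) = expc z ^+ n.
Proof.
elim: n => [|n IH]; first by rewrite mul0r /expc /= expR0 expi0 mul1r expr0.
by rewrite -addn1 natrD mulrDl mul1r expcD IH exprD expr1.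
Qed.

Lemma LogcK (z : C) : 0 < complex.Re z -> expc (Logc z) = z.
Proof.
case: z => x y /= x0; rewrite /expc /Logc /Arg /= x0 /=.
set u := y / x.
have u2_gt0 : 0 < Num.sqrt (1 + u ^+ 2) by rewrite sqrtr_gt0 ltr_pwDl // sqr_ge0.
have normE : Num.sqrt (x ^+ 2 + y ^+ 2) = x * Num.sqrt (1 + u ^+ 2).
  have -> : x ^+ 2 + y ^+ 2 = x ^+ 2 * (1 + u ^+ 2).
    by rewrite /u mulrDr mulr1 expr_div_n mulrCA divff ?mulr1 // expf_neq0 // gt_eqF.
  by rewrite sqrtrM ?sqr_ge0 // sqrtr_sqr gtr0_norm.
rewrite lnK ?posrE ?normE ?mulr_gt0 //.
have cosE : cos (atan u) = (Num.sqrt (1 + u ^+ 2))^-1 by rewrite cos_atan.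
have sinE : sin (atan u) = u * cos (atan u).
  by rewrite -{2}(atanK u) /tan divfK // cosE invr_eq0 gt_eqF.
rewrite /expi sinE cosE; simpc.
apply/eqP; rewrite eq_complex /=; apply/andP; split; apply/eqP.
  by rewrite mulfK // gt_eqF.
by rewrite /u; field; rewrite ?gt_eqF.
Qed.

Lemma abs_expR_sub1_le (a : R) : `|a| <= 1 -> `|expR a - 1| <= expR 1 * `|a|.
Proof.
move=> a1; have a0 := normr_ge0 a; have e1 : 1 <= expR 1 :> R.
  by rewrite -expR0 ler_expR.
have ea : expR a <= expR 1.
  by rewrite ler_expR; apply: le_trans (ler_norm a) a1.
have lb := expR_ge1Dx a.
have ub : expR a - 1 <= a * expR a.
  have : (1 - a) * expR a <= expR (- a) * expR a.
    by rewrite ler_pM2r ?expR_gt0 //; exact: expR_ge1Dx.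
  by rewrite -expRD addNr expR0 mulrBl mul1r; lra.
have := ler_norm a; have := ler_norm (- a); rewrite normrN => aN aP.
rewrite ler_norml; apply/andP; split; nra.
Qed.

Lemma normc_expc_sub1_le (z : C) :
  normc z <= 1 -> normc (expc z - 1) <= (2 * expR 1 + 1) * normc z.
Proof.
case: z => a b z1.
have aN : `|a| <= normc (a +i* b) := abs_Re_le_normc (a +i* b).
have bN : `|b| <= normc (a +i* b) := abs_Im_le_normc (a +i* b).
have -> : expc (a +i* b) - 1 = (expR a * cos b - 1) +i* (expR a * sin b).
  by rewrite /expc /expi /=; simpc.
apply: le_trans (normc_le_abs_ReIm _ _) _.
have e0 : 0 <= expR 1 :> R := expR_ge0 1.
have ea : expR a <= expR 1.
  by rewrite ler_expR; apply: le_trans (ler_norm a) (le_trans aN z1).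
have re : `|expR a * cos b - 1| <= expR 1 * `|a| + `|b|.
  have -> : expR a * cos b - 1 = (expR a - 1) * cos b + (cos b - 1) by ring.
  apply: le_trans (ler_normD _ _) _; apply: lerD; last exact: abs_cos_sub1_le.
  rewrite normrM; apply: le_trans (ler_piMr _ (cos_max _)) _ => //.
  by apply: abs_expR_sub1_le; apply: le_trans aN z1.
have im : `|expR a * sin b| <= expR 1 * `|b|.
  by rewrite normrM gtr0_norm ?expR_gt0 // ler_pM ?expR_ge0 ?abs_sin_le.
have := ler_wpM2l e0 aN; have := ler_wpM2l e0 bN.
rewrite !mulrDl mul1r => ebN eaN; lra.
Qed.

End ComplexExp.

Section BigO.
Variables (R : realType) (d : nat).
Local Notation C := R[i].
Local Notation normc := (@Normc.normc R).
Local Notation vnorm := (@vnorm R d).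
Local Notation th0 := (fun _ : 'I_d => 0 : R).
Implicit Types (f g : ('I_d -> R) -> C) (th : 'I_d -> R).

Lemma vnorm_ge0 th : 0 <= vnorm th.
Proof. exact: sqrtr_ge0. Qed.

Lemma vnorm0 : vnorm th0 = 0.
Proof. by rewrite /vnorm big1 ?sqrtr0 // => l _; rewrite expr0n. Qed.

Lemma abs_coord_le_vnorm th l : `|th l| <= vnorm th.
Proof.
rewrite /vnorm -sqrtr_sqr ler_wsqrtr // (bigD1 l) //= lerDl.
by apply: sumr_ge0 => i _; apply: sqr_ge0.
Qed.

Lemma OAt0_near f g p delta : 0 < delta ->
  (forall th, vnorm th < delta -> f th = g th) -> OAt0 f p -> OAt0 g p.
Proof.
move=> delta0 fg [K [e [e0 fO]]]; exists K, (Num.min e delta).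
split=> [|th]; first by rewrite lt_min e0.
by rewrite lt_min => /andP[the thd]; rewrite -fg // fO.
Qed.

Lemma OAt0_ext f g p : OAt0 f p -> (forall th, f th = g th) -> OAt0 g p.
Proof. by move=> fO fg; apply: OAt0_near ltr01 (fun th _ => fg th) fO. Qed.

Lemma OAt0_nonneg f p : OAt0 f p -> exists K delta, [/\ 0 <= K, 0 < delta &
  forall th, vnorm th < delta -> normc (f th) <= K * vnorm th ^+ p].
Proof.
move=> [K [delta [delta0 fO]]]; exists `|K|, delta; split=> // th thd.
apply: le_trans (fO _ thd) _; rewrite ler_wpM2r ?exprn_ge0 ?vnorm_ge0 //.
exact: ler_norm.
Qed.

Lemma OAt0_small f p : (0 < p)%N -> OAt0 f p -> forall e, 0 < e ->
  exists2 delta, 0 < delta & forall th, vnorm th < delta -> normc (f th) <= e.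
Proof.
move=> p0 /OAt0_nonneg [K [delta [K0 delta0 fO]]] e e0.
have K1 : 0 < K + 1 by rewrite ltr_wpDl.
exists (Num.min delta (Num.min 1 (e / (K + 1)))).
  by rewrite !lt_min delta0 ltr01 divr_gt0.
move=> th; rewrite !lt_min => /andP[thd /andP[th1 the]].
apply: le_trans (fO _ thd) _; have v0 := vnorm_ge0 th.
have vp : vnorm th ^+ p <= vnorm th.
  by rewrite -[leRHS]expr1 ler_wiXn2l // ltW.
have : (K + 1) * vnorm th <= e by rewrite mulrC -ler_pdivlMr // ltW.
have : K * vnorm th ^+ p <= K * vnorm th by rewrite ler_wpM2l.
nra.
Qed.

Lemma OAt0_eq0 f p : OAt0 f p.+1 -> f th0 = 0.
Proof.
move=> [K [delta [delta0 fO]]]; apply: Normc.eq0_normc; apply/eqP.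
have := fO th0; rewrite vnorm0 expr0n /= mulr0 => /(_ delta0) f0.
by rewrite eq_le f0 normc_ge0.
Qed.

Lemma OAt0_weaken f p r : (p <= r)%N -> OAt0 f r -> OAt0 f p.
Proof.
move=> pr /OAt0_nonneg [K [delta [K0 delta0 fO]]].
exists K, (Num.min delta 1); split=> [|th]; first by rewrite lt_min delta0 ltr01.
rewrite lt_min => /andP[thd th1]; apply: le_trans (fO _ thd) _.
by rewrite ler_wpM2l // ler_wiXn2l ?vnorm_ge0 ?ltW.
Qed.

Lemma OAt0_cst (c : C) : OAt0 (fun _ : 'I_d -> R => c) 0.
Proof. by exists (normc c), 1; split=> // th _; rewrite expr0 mulr1. Qed.

Lemma OAt00 p : OAt0 (fun _ : 'I_d -> R => 0) p.
Proof. by exists 0, 1; split=> // th _; rewrite mul0r Normc.normc0. Qed.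

Lemma OAt0D f g p : OAt0 f p -> OAt0 g p -> OAt0 (fun th => f th + g th) p.
Proof.
move=> [K1 [e1 [e10 fO]]] [K2 [e2 [e20 gO]]].
exists (K1 + K2), (Num.min e1 e2); split=> [|th]; first by rewrite lt_min e10.
rewrite lt_min => /andP[th1 th2]; apply: le_trans (le_normcD _ _) _.
by rewrite mulrDl lerD ?fO ?gO.
Qed.

Lemma OAt0N f p : OAt0 f p -> OAt0 (fun th => - f th) p.
Proof. by move=> [K [e [e0 fO]]]; exists K, e; split=> // th; rewrite normcN; apply: fO. Qed.

Lemma OAt0B f g p : OAt0 f p -> OAt0 g p -> OAt0 (fun th => f th - g th) p.
Proof. by move=> fO gO; apply: OAt0D fO (OAt0N gO). Qed.

Lemma OAt0M f g p r : OAt0 f p -> OAt0 g r -> OAt0 (fun th => f th * g th) (p + r).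
Proof.
move=> [K1 [e1 [e10 fO]]] [K2 [e2 [e20 gO]]].
exists (K1 * K2), (Num.min e1 e2); split=> [|th]; first by rewrite lt_min e10.
rewrite lt_min => /andP[th1 th2]; rewrite Normc.normcM exprD mulrACA.
by apply: ler_pM; rewrite ?normc_ge0 ?fO ?gO.
Qed.

Lemma OAt0_bndM f g p : OAt0 f 0 -> OAt0 g p -> OAt0 (fun th => f th * g th) p.
Proof. by move=> fO gO; have := OAt0M fO gO; rewrite add0n. Qed.

Lemma OAt0_sum (I : Type) (s : seq I) (P : pred I) (F : I -> ('I_d -> R) -> C) p :
  (forall i, P i -> OAt0 (F i) p) ->
  OAt0 (fun th => \sum_(i <- s | P i) F i th) p.
Proof.
move=> FO; elim: s => [|i s IH].
  by apply: OAt0_ext (OAt00 p) _ => th; rewrite big_nil.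
case Pi: (P i).
  by apply: OAt0_ext (OAt0D (FO i Pi) IH) _ => th; rewrite big_cons Pi.
by apply: OAt0_ext IH _ => th; rewrite big_cons Pi.
Qed.

Definition lipschitz0 f := OAt0 (fun th => f th - f th0) 1.

Lemma lipschitz0_ext f g : lipschitz0 f -> (forall th, f th = g th) -> lipschitz0 g.
Proof. by move=> fL fg; apply: OAt0_ext fL _ => th; rewrite !fg. Qed.

Lemma lipschitz0_bounded f : lipschitz0 f -> OAt0 f 0.
Proof.
move=> fL; apply: OAt0_ext (OAt0D (OAt0_weaken (leq0n 1) fL) (OAt0_cst (f th0))) _.
by move=> th; rewrite subrK.
Qed.

Lemma lipschitz0_cst (c : C) : lipschitz0 (fun _ : 'I_d -> R => c).
Proof. by apply: OAt0_ext (OAt00 1) _ => th; rewrite subrr. Qed.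

Lemma lipschitz0M f g : lipschitz0 f -> lipschitz0 g -> lipschitz0 (fun th => f th * g th).
Proof.
move=> fL gL.
have := OAt0D (OAt0M fL (lipschitz0_bounded gL)) (OAt0M (OAt0_cst (f th0)) gL).
by move/OAt0_ext; apply=> th; rewrite mulrBl mulrBr addrA subrK.
Qed.

Lemma lipschitz0_sum (I : Type) (s : seq I) (P : pred I) (F : I -> ('I_d -> R) -> C) :
  (forall i, P i -> lipschitz0 (F i)) ->
  lipschitz0 (fun th => \sum_(i <- s | P i) F i th).
Proof.
by move/OAt0_sum/OAt0_ext; apply=> th; rewrite sumrB.
Qed.

Lemma monomial_symbol0 (k : 'I_d -> int) : monomial_symbol k th0 = 1.
Proof.
rewrite /monomial_symbol /dotZ big1 ?oppr0 ?expi0 // => l _.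
by rewrite mul0r.
Qed.

Lemma lipschitz0_monomial_symbol (k : 'I_d -> int) : lipschitz0 (monomial_symbol k).
Proof.
exists (2 * \sum_l `|(k l)%:~R : R|), 1; split=> // th _.
rewrite monomial_symbol0 expr1; apply: le_trans (normc_expi_sub1_le _) _.
rewrite normrN -mulrA ler_wpM2l // mulr_suml /dotZ.
apply: le_trans (ler_norm_sum _ _ _) _; apply: ler_sum => l _.
by rewrite normrM mulrC ler_wpM2l ?abs_coord_le_vnorm.
Qed.

Lemma lipschitz0_laurent_symbol (p : laurent R d) : lipschitz0 (laurent_symbol p).
Proof.
apply: (@lipschitz0_sum _ _ _ (fun m th => (m.1)%:C * monomial_symbol m.2 th)) => m _.
by apply: lipschitz0M; [apply: lipschitz0_cst | apply: lipschitz0_monomial_symbol].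
Qed.

End BigO.

Section LipschitzMatrix.
Variables (R : realType) (d : nat).
Local Notation C := R[i].

Definition lipschitz0_mx m n (F : ('I_d -> R) -> 'M[C]_(m, n)) :=
  forall i j, lipschitz0 (fun th => F th i j).

Lemma lipschitz0_mx_cst m n (A : 'M[C]_(m, n)) : lipschitz0_mx (fun _ => A).
Proof. by move=> i j; apply: lipschitz0_cst. Qed.

Lemma lipschitz0_mxM m n p (F : _ -> 'M[C]_(m, n)) (G : _ -> 'M[C]_(n, p)) :
  lipschitz0_mx F -> lipschitz0_mx G -> lipschitz0_mx (fun th => F th *m G th).
Proof.
move=> FL GL i j.
have := @lipschitz0_sum _ _ _ (index_enum 'I_n) xpredT
  (fun k th => F th i k * G th k j) (fun k _ => lipschitz0M (FL i k) (GL k j)).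
by move/lipschitz0_ext; apply=> th; rewrite mxE.
Qed.

Lemma lipschitz0_mxX n (F : _ -> 'M[C]_n) k :
  lipschitz0_mx F -> lipschitz0_mx (fun th => F th ^+ k).
Proof.
move=> FL; elim: k => [|k IH] i j.
  by apply: lipschitz0_ext (lipschitz0_mx_cst 1%:M i j) _ => th; rewrite expr0.
by apply: lipschitz0_ext (lipschitz0_mxM FL IH i j) _ => th; rewrite exprS.
Qed.

Lemma lipschitz0_diag_mx n (f : 'I_n -> ('I_d -> R) -> C) :
  (forall j, lipschitz0 (f j)) -> lipschitz0_mx (fun th => diag_mx (\row_j f j th)).
Proof.
move=> fL i j; have [<-|ij] := eqVneq i j.
  by apply: lipschitz0_ext (fL i) _ => th; rewrite !mxE eqxx mulr1n.
by apply: lipschitz0_ext (lipschitz0_cst d 0) _ => th; rewrite !mxE (negbTE ij).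
Qed.

End LipschitzMatrix.

Section BoundedCoefs.
Variables (R : realType) (d : nat).
Local Notation C := R[i].
Implicit Types (P Q : ('I_d -> R) -> {poly C}).

Definition bounded_coefs P := forall k, OAt0 (fun th => (P th)`_k) 0.

Lemma bounded_coefs_ext P Q : bounded_coefs P -> (forall th, P th = Q th) -> bounded_coefs Q.
Proof. by move=> PO PQ k; apply: OAt0_ext (PO k) _ => th; rewrite PQ. Qed.

Lemma bounded_coefs_cst (p : {poly C}) : bounded_coefs (fun _ => p).
Proof. by move=> k; apply: OAt0_cst. Qed.

Lemma bounded_coefsC (f : ('I_d -> R) -> C) : OAt0 f 0 -> bounded_coefs (fun th => (f th)%:P).
Proof.
move=> fO [|k]; first by apply: OAt0_ext fO _ => th; rewrite coefC.
by apply: OAt0_ext (OAt00 _ _ 0) _ => th; rewrite coefC.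
Qed.

Lemma bounded_coefsD P Q : bounded_coefs P -> bounded_coefs Q ->
  bounded_coefs (fun th => P th + Q th).
Proof. by move=> PO QO k; apply: OAt0_ext (OAt0D (PO k) (QO k)) _ => th; rewrite coefD. Qed.

Lemma bounded_coefsB P Q : bounded_coefs P -> bounded_coefs Q ->
  bounded_coefs (fun th => P th - Q th).
Proof. by move=> PO QO k; apply: OAt0_ext (OAt0B (PO k) (QO k)) _ => th; rewrite coefB. Qed.

Lemma bounded_coefsM P Q : bounded_coefs P -> bounded_coefs Q ->
  bounded_coefs (fun th => P th * Q th).
Proof.
move=> PO QO k.
have : OAt0 (fun th => \sum_(j < k.+1) (P th)`_j * (Q th)`_(k - j)) 0.
  by apply: OAt0_sum => j _; apply: OAt0_bndM.
by move/OAt0_ext; apply=> th; rewrite coefM.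
Qed.

Lemma bounded_coefs_big (op : {poly C} -> {poly C} -> {poly C}) (x : {poly C})
    (I : Type) (s : seq I) (S : pred I) (F : I -> ('I_d -> R) -> {poly C}) :
  (forall P Q, bounded_coefs P -> bounded_coefs Q ->
     bounded_coefs (fun th => op (P th) (Q th))) ->
  (forall i, S i -> bounded_coefs (F i)) ->
  bounded_coefs (fun th => \big[op/x]_(i <- s | S i) F i th).
Proof.
move=> opO FO; elim: s => [|i s IH].
  by apply: bounded_coefs_ext (bounded_coefs_cst x) _ => th; rewrite big_nil.
case Si: (S i).
  by apply: bounded_coefs_ext (opO _ _ (FO i Si) IH) _ => th; rewrite big_cons Si.
by apply: bounded_coefs_ext IH _ => th; rewrite big_cons Si.
Qed.

Lemma bounded_coefs_char_poly n (A : ('I_d -> R) -> 'M[C]_n) :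
  (forall i j, OAt0 (fun th => A th i j) 0) -> bounded_coefs (fun th => char_poly (A th)).
Proof.
move=> AO; have entryO i j : bounded_coefs (fun th => char_poly_mx (A th) i j).
  have := bounded_coefsB (bounded_coefs_cst ('X *+ (i == j))) (bounded_coefsC (AO i j)).
  by move/bounded_coefs_ext; apply=> th; rewrite !mxE.
rewrite /char_poly /determinant.
apply: bounded_coefs_big => [P Q|s _]; first exact: bounded_coefsD.
apply: bounded_coefsM (bounded_coefs_cst _) _.
by apply: bounded_coefs_big => [P Q|i _]; [exact: bounded_coefsM | exact: entryO].
Qed.

End BoundedCoefs.

Section Propagation.
Variables (R : realType) (d : nat).
Local Notation C := R[i].
Local Notation normc := (@Normc.normc R).
Local Notation vnorm := (@vnorm R d).

Lemma OAt0_pow_of_Logc (G g : ('I_d -> R) -> C) n p : (0 < p)%N ->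
  OAt0 (fun th => g th - 1) 1 -> OAt0 (fun th => G th - 1) 1 ->
  OAt0 (fun th => Logc (G th) - n%:R * Logc (g th)) p ->
  OAt0 (fun th => G th - g th ^+ n) p.
Proof.
move=> p0 g1 G1 LO; have half0 : 0 < 2^-1 :> R by rewrite invr_gt0.
have [e1 e10 g_near1] := OAt0_small (ltn0Sn 0) g1 half0.
have [e2 e20 G_near1] := OAt0_small (ltn0Sn 0) G1 half0.
have [e3 e30 L_small] := OAt0_small p0 LO ltr01.
have [K [e4 [_ e40 L_le]]] := OAt0_nonneg LO.
exists (2 ^+ n * ((2 * expR 1 + 1) * K)), (Num.min e1 (Num.min e2 (Num.min e3 e4))).
split=> [|th]; first by rewrite !lt_min e10 e20 e30 e40.
rewrite !lt_min => /and4P[th1 th2 th3 th4].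
set L := Logc (G th) - n%:R * Logc (g th).
have GE : G th = g th ^+ n * expc L.
  rewrite -{1}(LogcK (Re_gt0_near1 (G_near1 _ th2))).
  rewrite -[Logc (G th)](subrK (n%:R * Logc (g th))).
  by rewrite -/L addrC expcD expcMn LogcK // (Re_gt0_near1 (g_near1 _ th1)).
have -> : G th - g th ^+ n = g th ^+ n * (expc L - 1) by rewrite GE mulrBr mulr1.
rewrite Normc.normcM normcX -mulrA.
apply: ler_pM; rewrite ?exprn_ge0 ?normc_ge0 //.
  by rewrite lerXn2r ?nnegrE ?normc_ge0 ?normc_le2_near1 ?g_near1.
apply: le_trans (normc_expc_sub1_le (L_small _ th3)) _.
by rewrite -mulrA ler_wpM2l ?L_le // addr_ge0 ?mulr_ge0 ?expR_ge0.
Qed.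

Lemma OAt0_power_defect n (A : ('I_d -> R) -> 'M[C]_n.+1) (W : ('I_d -> R) -> 'cV[C]_n.+1)
    i0 (G : nat -> ('I_d -> R) -> C) (g : ('I_d -> R) -> C) p :
  (forall j th, G j th = (A th ^+ j *m W th) i0 0) ->
  (forall i j, OAt0 (fun th => A th i j) 0) ->
  (exists2 delta, 0 < delta &
     forall th, vnorm th < delta -> root (char_poly (A th)) (g th)) ->
  (forall j, (j <= n)%N -> OAt0 (fun th => G j th - g th ^+ j) p) ->
  forall j, OAt0 (fun th => G j th - g th ^+ j) p.
Proof.
move=> GE AO [delta delta0 g_root] G_init; elim/ltn_ind => j IH.
have [/G_init //|nj] := leqP j n.
have [m jE] : exists m, j = (m + n.+1)%N by exists (j - n.+1)%N; rewrite subnK.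
rewrite jE.
have : OAt0 (fun th => - \sum_(k < n.+1)
    (char_poly (A th))`_k * (G (m + k)%N th - g th ^+ (m + k))) p.
  apply/OAt0N/OAt0_sum => k _; apply: OAt0_bndM (bounded_coefs_char_poly AO k) _.
  by apply: IH; rewrite jE ltn_add2l.
apply: OAt0_near delta0 _ => th thd.
rewrite !GE (char_poly_recurrence _ i0 m (g_root _ thd)).
by congr (- _); apply: eq_bigr => k _; rewrite GE.
Qed.

End Propagation.

Section LatticeBoltzmann.
Variables (R : realType) (d q : nat) (hq : (0 < q)%N) (c : 'I_q -> 'I_d -> int).
Variables (M : 'M[R]_q) (s : 'I_q -> R) (eps : 'cV[R]_q) (w : 'I_q -> laurent R d).
Local Notation C := R[i].
Local Notation th0 := (fun _ : 'I_d => 0 : R).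
Local Notation i1 := (idx1 hq).
Local Notation E := (Ehat hq c M s eps).

Lemma lipschitz0_Ehat : lipschitz0_mx E.
Proof.
apply: lipschitz0_mxM; last exact: lipschitz0_mx_cst.
apply: lipschitz0_mxM; last exact: lipschitz0_mx_cst.
apply: lipschitz0_mxM; first exact: lipschitz0_mx_cst.
by apply: lipschitz0_diag_mx => j; apply: lipschitz0_monomial_symbol.
Qed.

Lemma lipschitz0_gstart n : lipschitz0 (gstart hq c M s eps w n).
Proof.
have wL : lipschitz0_mx (what w).
  by move=> i j; apply: lipschitz0_ext (lipschitz0_laurent_symbol (w i)) _ => th; rewrite mxE.
exact: lipschitz0_mxM (lipschitz0_mxX n lipschitz0_Ehat) wL i1 0.
Qed.

Lemma KmatE i j : Kmat hq s eps i j =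
  (i == j)%:R - s i * ((i == j)%:R - eps i 0 * (j == i1)%:R).
Proof. by rewrite /Kmat mul_diag_mx !mxE big_ord1 /e1 !mxE eqxx andbT. Qed.

Lemma Kmat_row1 : eps i1 0 = 1 -> forall j, Kmat hq s eps i1 j = (i1 == j)%:R.
Proof. by move=> eps1 j; rewrite KmatE eps1 mul1r [(j == _)]eq_sym subrr mulr0 subr0. Qed.

Lemma That0 : M \in unitmx -> That c M th0 = 1%:M.
Proof.
move=> Mu; rewrite /That (_ : diag_mx _ = 1%:M).
  by rewrite mulmx1 /realC -map_mxM mulmxV // map_mx1.
by apply/matrixP => i j; rewrite !mxE monomial_symbol0.
Qed.

Lemma gstart0 n : M \in unitmx -> eps i1 0 = 1 ->
  gstart hq c M s eps w n th0 = laurent_symbol (w i1) th0.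
Proof.
move=> Mu eps1; rewrite /gstart /Ehat That0 // mul1mx.
elim: n => [|n IH]; first by rewrite expr0 mul1mx mxE.
rewrite exprS -mulmxE -mulmxA mxE (bigD1 i1) //= big1 => [|j j1].
  by rewrite mxE Kmat_row1 // eqxx rmorph1 mul1r IH addr0.
by rewrite mxE Kmat_row1 // eq_sym (negbTE j1) rmorph0 mul0r.
Qed.

Lemma OAt0_gstart_sub1 n : M \in unitmx -> eps i1 0 = 1 ->
  laurent_symbol (w i1) th0 = 1 -> OAt0 (fun th => gstart hq c M s eps w n th - 1) 1.
Proof.
move=> Mu eps1 w1; apply: OAt0_ext (lipschitz0_gstart n) _ => th.
by rewrite gstart0 ?w1.
Qed.

Definition active_cols := [set i : 'I_q | (i == i1) || (s i != 1)].

Lemma card_active_cols : #|active_cols| = (Qnum hq s).+1.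
Proof.
rewrite (_ : active_cols = i1 |: [set i | (i != i1) && (s i != 1)]).
  by rewrite cardsU1 !inE eqxx.
by apply/setP => i; rewrite !inE; case: (i == i1).
Qed.

Lemma Ehat_inactive_col th i k : k \notin active_cols -> E th i k = 0.
Proof.
rewrite inE negb_or => /andP[k1 /negPn/eqP sk1].
rewrite mxE big1 // => l _; rewrite [X in _ * X]mxE KmatE (negbTE k1) mulr0 subr0.
have [->|lk] := eqVneq l k; first by rewrite sk1 mul1r subrr rmorph0 mulr0.
by rewrite mulr0 subrr rmorph0 mulr0.
Qed.

Local Notation enumA := (enumJ card_active_cols).

Definition Ehat_active (th : 'I_d -> R) : 'M[C]_((Qnum hq s).+1) :=
  mxsub enumA enumA (E th).

Lemma idx1_active : i1 \in active_cols.
Proof. by rewrite inE eqxx. Qed.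

Lemma gstart_active n th i0 : enumA i0 = i1 ->
  gstart hq c M s eps w n th = (Ehat_active th ^+ n *m rowsub enumA (what w th)) i0 0.
Proof.
move=> i0E; rewrite /gstart -rowsub_exp_mulmx ?mxE ?i0E // => i k.
exact: Ehat_inactive_col.
Qed.

Lemma bounded_Ehat_active i j : OAt0 (fun th => Ehat_active th i j) 0.
Proof.
apply: lipschitz0_bounded; apply: lipschitz0_ext (lipschitz0_Ehat (enumA i) (enumA j)) _.
by move=> th; rewrite /Ehat_active [RHS]mxE.
Qed.

Lemma root_Ehat_active (g : ('I_d -> R) -> C) :
  (exists delta, 0 < delta /\
     forall th, vnorm th < delta -> Phihat hq c M s eps (g th) th = 0) ->
  OAt0 (fun th => g th - 1) 1 ->
  exists2 delta, 0 < delta &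
    forall th, vnorm th < delta -> root (char_poly (Ehat_active th)) (g th).
Proof.
move=> [delta1 [delta10 g_root]] g1.
have half0 : 0 < 2^-1 :> R by rewrite invr_gt0.
have [delta2 delta20 g_near1] := OAt0_small (ltn0Sn 0) g1 half0.
exists (Num.min delta1 delta2) => [|th]; first by rewrite lt_min delta10.
rewrite lt_min => /andP[th1 th2].
have g0 : g th != 0.
  by apply: contraTneq (Re_gt0_near1 (g_near1 _ th2)) => ->; rewrite ltxx.
apply: (root_char_poly_mxsub _ _ g0) => [i k|]; first exact: Ehat_inactive_col.
by move/eqP: (g_root _ th1); rewrite mulf_eq0 expfz_eq0 (negbTE g0) andbF => /eqP.
Qed.

End LatticeBoltzmann.

Theorem proposition3 (R : realType) (d q : nat) (hd : (0 < d)%N) (hq : (0 < q)%N)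
  (c : 'I_q -> 'I_d -> int) (M : 'M[R]_q) (s : 'I_q -> R) (eps : 'cV[R]_q)
  (w : 'I_q -> laurent R d) (g1 : ('I_d -> R) -> complex R) (H : nat) :
  M \in unitmx ->
  (forall i : 'I_q, i != idx1 hq -> 0 < s i <= 2) ->
  eps (idx1 hq) 0 = 1 ->
  (* g1 is the consistency root of the amplification polynomial *)
  (exists delta : R, 0 < delta /\ (forall th : 'I_d -> R, vnorm th < delta ->
     Phihat hq c M s eps (g1 th) th = 0)) ->
  OAt0 (fun th : 'I_d -> R => (g1 th - 1)%R) 1 ->
  (0 < H)%N ->
  (* (i) *)
  OAt0 (fun th : 'I_d -> R => (laurent_symbol (w (idx1 hq)) th - 1)%R) H.+1 ->
  (* (ii) *)
  (forall n : nat, (1 <= n <= Qnum hq s)%N ->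
     OAt0 (fun th : 'I_d -> R =>
       (Logc (gstart hq c M s eps w n th) - n%:R * Logc (g1 th))%R) H.+1) ->
  forall n : nat, (Qnum hq s < n)%N ->
    OAt0 (fun th : 'I_d -> R => (gstart hq c M s eps w n th - g1 th ^+ n)%R) H.+1.
Proof.
move=> Mu _ eps1 g1_root g1_1 _ w1_1 log_start n _.
have [i0 i0E] := enumJ_onto (card_active_cols hq s) (idx1_active hq s).
have w1_0 : laurent_symbol (w (idx1 hq)) (fun _ => 0) = 1.
  by apply/eqP; rewrite -subr_eq0 (OAt0_eq0 w1_1).
apply: (OAt0_power_defect (fun j th => gstart_active c M eps w j th i0E)).
- exact: bounded_Ehat_active.
- exact: root_Ehat_active g1_root g1_1.
case=> [_|j jQ].
  by apply: OAt0_ext w1_1 _ => th; rewrite /gstart expr0 mul1mx mxE expr0.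
apply: OAt0_pow_of_Logc (ltn0Sn H) g1_1 (OAt0_gstart_sub1 _ _ _ Mu eps1 w1_0) _.
exact: log_start.
Qed.
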